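(* Let $q\in(0,\tfrac12)$ and let $T\sim U(1,2)$, $S\sim U(-1,0)$ be independent. Let $p_3^{PD}$ be the probability that $$P_{T,S}(x)=(T+S-1)x^3+\big(1-T-2S+q(S-1-T)\big)x^2+\big(S+q(T-S)\big)x$$ has exactly three distinct roots in $[0,1]$. Then $$p_3^{PD}\leq \frac{q}{2(1-q)}.$$ In particular $p_3^{PD}\le \tfrac12$ for all $q\in(0,\tfrac12)$ and $p_3^{PD}\to 0$ as $q\to 0^+$. *)

From HB Require Import structures.
From mathcomp Require Import all_boot all_order all_algebra.
From mathcomp Require Import all_classical all_reals all_analysis.
Set Implicit Arguments. Unset Strict Implicit. Unset Printing Implicit Defensive.
Import Order.TTheory GRing.Theory Num.Theory.
Import numFieldNormedType.Exports.
Local Open Scope classical_set_scope.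
Local Open Scope ring_scope.

Definition P_TS {R : realType} (q t s x : R) : R :=
  (t + s - 1) * x ^+ 3
  + (1 - t - 2 * s + q * (s - 1 - t)) * x ^+ 2
  + (s + q * (t - s)) * x.

Definition three_roots_01 {R : realType} (q : R) (ts : R * R) : Prop :=
  exists x1 x2 x3 : R,
    [/\ x1 != x2, x1 != x3 & x2 != x3] /\
    [/\ 0 <= x1 <= 1, 0 <= x2 <= 1 & 0 <= x3 <= 1] /\
    [/\ P_TS q ts.1 ts.2 x1 = 0, P_TS q ts.1 ts.2 x2 = 0 & P_TS q ts.1 ts.2 x3 = 0] /\
    (forall x : R, 0 <= x <= 1 -> P_TS q ts.1 ts.2 x = 0 ->
       [\/ x = x1, x = x2 | x = x3]).

Lemma lt_1_2 {R : realType} : (1 : R) < 2.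
Proof. by rewrite ltr1n. Qed.

Lemma lt_m1_0 {R : realType} : (-1 : R) < 0.
Proof. by rewrite ltrN10. Qed.

Definition p3PD {R : realType} (q : R) : \bar R :=
  ((uniform_prob (@lt_1_2 R)) \x (uniform_prob (@lt_m1_0 R)))%E
    [set ts | three_roots_01 q ts].

(* Writing P_{t,s}(x) = x Q(x) with Q(x) = a x^2 + b x + c, one has
   Q(1) = a + b + c = -q < 0.  Three distinct roots of P in [0,1] give two
   distinct roots r1, r2 of Q in (0,1]; by Viete's relations
   Q(1) = a (1-r1)(1-r2), so a < 0 and r1, r2 < 1, whence
   b + 2c = -a (r1 (1-r2) + r2 (1-r1)) > 0, i.e. (1-q)(t-1) < -q s.
   The event is therefore contained in this half-plane region, whose section
   at height s in [-1,0] meets [1,2] in an interval of length -q s/(1-q) <= 1;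
   integrating in s gives the mass q/(2(1-q)).  Since the event is not shown
   to be measurable, the comparison uses the monotonicity of the product of
   the uniform laws on all sets, both being integrals of densities.
   Finally q/(2(1-q)) <= min(q, 1/2) on (0,1/2), which gives the bound 1/2
   and, by squeezing, the limit 0 as q -> 0+. *)

From HB Require Import structures.
From mathcomp Require Import all_boot all_order all_algebra.
From mathcomp Require Import all_classical all_reals all_analysis.
From mathcomp Require Import ring lra measurable_realfun.
Import Order.TTheory GRing.Theory Num.Theory.
Import numFieldNormedType.Exports.
Local Open Scope classical_set_scope.
Local Open Scope ring_scope.

(* A quadratic a x^2 + b x + c that is negative at 1 and has two distinct
   roots in (0,1] satisfies b + 2c > 0: by Viete, a + b + c = a(1-r1)(1-r2)
   forces a < 0 and r1, r2 < 1, while b + 2c = -a(r1(1-r2) + r2(1-r1)). *)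
Lemma quadratic_two_roots_01 {R : realFieldType} {a b c r1 r2 : R} :
  a + b + c < 0 -> r1 != r2 -> 0 < r1 <= 1 -> 0 < r2 <= 1 ->
  a * r1 ^+ 2 + b * r1 + c = 0 -> a * r2 ^+ 2 + b * r2 + c = 0 ->
  0 < b + 2 * c.
Proof.
move=> neg1 r12 /andP[r1_gt0 r1_le1] /andP[r2_gt0 r2_le1] root1 root2.
have sum_roots : b = - a * (r1 + r2).
  have : (r1 - r2) * (a * (r1 + r2) + b) = 0.
    by rewrite -[RHS](subrr 0) -{1}root1 -root2; ring.
  move/eqP; rewrite mulf_eq0 subr_eq0 (negbTE r12) /= addr_eq0 => /eqP sum_eq.
  by rewrite mulNr sum_eq opprK.
have prod_roots : c = a * r1 * r2.
  by apply: (addrI (a * r1 ^+ 2 + b * r1)); rewrite root1 sum_roots; ring.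
have value1 : a + b + c = a * ((1 - r1) * (1 - r2)).
  by rewrite sum_roots prod_roots; ring.
have dist1_ge0 : 0 <= (1 - r1) * (1 - r2) by apply: mulr_ge0; lra.
have a_lt0 : a < 0 by move: neg1; rewrite value1; nra.
have dist1_gt0 : 0 < (1 - r1) * (1 - r2) by move: neg1; rewrite value1; nra.
have r1_lt1 : r1 < 1 by nra.
have r2_lt1 : r2 < 1 by nra.
have -> : b + 2 * c = - a * (r1 * (1 - r2) + r2 * (1 - r1)).
  by rewrite sum_roots prod_roots; ring.
by apply: mulr_gt0; [rewrite oppr_gt0 | nra].
Qed.

Lemma two_of_three_avoid {T : eqType} (P : T -> Prop) (z : T) {x1 x2 x3 : T} :
  [/\ x1 != x2, x1 != x3 & x2 != x3] -> [/\ P x1, P x2 & P x3] ->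
  exists r1 r2, [/\ r1 != r2, r1 != z, r2 != z, P r1 & P r2].
Proof.
move=> [n12 n13 n23] [P1 P2 P3].
have [->|z1] := eqVneq z x1; first by exists x2, x3; split; rewrite // eq_sym.
have [->|z2] := eqVneq z x2; first by exists x1, x3; split; rewrite // eq_sym.
by exists x1, x2; split; rewrite // eq_sym.
Qed.

(* P_{t,s}(x) = x Q(x) for a quadratic Q whose coefficients sum to -q. *)
Lemma P_TS_factor (R : realType) (q t s x : R) : P_TS q t s x =
  x * ((t + s - 1) * x ^+ 2 + (1 - t - 2 * s + q * (s - 1 - t)) * x + (s + q * (t - s))).
Proof. by rewrite /P_TS; ring. Qed.

Definition root_region {R : realType} (q : R) : set (R * R) :=
  [set ts | (1 - q) * (ts.1 - 1) < - q * ts.2].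

(* Three distinct roots in [0,1] give two distinct roots of Q in (0,1], so the
   quadratic lemma applies; b + 2c = (1-q)(1-t) - q s for the coefficients of Q. *)
Lemma three_roots_in_region (R : realType) (q : R) (ts : R * R) : 0 < q ->
  three_roots_01 q ts -> root_region q ts.
Proof.
case: ts => t s q_gt0 [x1 [x2 [x3 [distinct [[h1 h2 h3] [[p1 p2 p3] _]]]]]] /=.
have [r1 [r2 [r12 r1_neq0 r2_neq0 [r1_01 root1] [r2_01 root2]]]] :=
  two_of_three_avoid (fun x => 0 <= x <= 1 /\ P_TS q t s x = 0) 0 distinct
    (And3 (conj h1 p1) (conj h2 p2) (conj h3 p3)).
have root_Q x : x != 0 -> 0 <= x <= 1 -> P_TS q t s x = 0 ->
    0 < x <= 1 /\ (t + s - 1) * x ^+ 2 + (1 - t - 2 * s + q * (s - 1 - t)) * x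
                  + (s + q * (t - s)) = 0.
  move=> x_neq0 /andP[x_ge0 x_le1]; rewrite P_TS_factor => /eqP.
  rewrite mulf_eq0 (negbTE x_neq0) /= => /eqP Q_x; split=> //.
  by rewrite lt_neqAle eq_sym x_neq0 x_ge0 x_le1.
have [r1_pos Q1] := root_Q r1 r1_neq0 r1_01 root1.
have [r2_pos Q2] := root_Q r2 r2_neq0 r2_01 root2.
have Q_at1 : (t + s - 1) + (1 - t - 2 * s + q * (s - 1 - t)) + (s + q * (t - s)) < 0.
  by rewrite (_ : _ + _ = - q) ?oppr_lt0 //; ring.
have := quadratic_two_roots_01 Q_at1 r12 r1_pos r2_pos Q1 Q2.
rewrite /root_region /=; nra.
Qed.

(* The nonnegative integral is monotone in the domain and in the integrand,
   without any measurability assumption: it is the supremum of the integrals of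
   the simple functions below the integrand on the domain. *)
Lemma ge0_le_integral_subset d (T : measurableType d) (R : realType)
    (mu : {measure set T -> \bar R}) (D E : set T) (f g : T -> \bar R) :
  D `<=` E -> (forall x, D x -> (0 <= f x)%E) -> (forall x, E x -> (0 <= g x)%E) ->
  (forall x, D x -> (f x <= g x)%E) ->
  (\int[mu]_(x in D) f x <= \int[mu]_(x in E) g x)%E.
Proof.
move=> DE f_ge0 g_ge0 fg.
rewrite (ge0_integralE mu f_ge0) (ge0_integralE mu g_ge0) /=.
apply: ereal_sup_le => _ [h h_le <-]; exists h => //= x.
apply: (le_trans (h_le x)); rewrite /patch.
case: ifPn => [/[!inE] Dx|_]; first by rewrite ifT ?inE ?fg //; exact: DE.
by case: ifPn => // /[!inE] /g_ge0.
Qed.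

(* The uniform law, being a density integral, is monotone on all sets. *)
Lemma uniform_prob_monotone (R : realType) (a b : R) (ab : a < b) :
  {homo uniform_prob ab : U V / U `<=` V >-> (U <= V)%E}.
Proof.
move=> U V UV.
by apply: ge0_le_integral_subset => // x _; rewrite lee_fin uniform_pdf_ge0.
Qed.

(* A product measure whose second factor is nonnegative and monotone on all sets
   is monotone on all sets, being the integral of the measures of the sections. *)
Lemma product_measure1_monotone d1 d2 (T1 : measurableType d1)
    (T2 : measurableType d2) (R : realType) (m1 : {measure set T1 -> \bar R})
    (m2 : set T2 -> \bar R) :
  (forall A, (0 <= m2 A)%E) -> {homo m2 : A B / A `<=` B >-> (A <= B)%E} ->
  {homo (m1 \x m2)%E : A B / A `<=` B >-> (A <= B)%E}.
Proof.
move=> m2_ge0 m2_homo A B AB; apply: ge0_le_integral_subset => // x _ /=.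
- exact: m2_ge0.
- exact: m2_ge0.
- by apply: m2_homo => y; rewrite /xsection /= !inE; exact: AB.
Qed.

Lemma uniform_prob_itv (R : realType) (a b e : R) (ab : a < b) : a <= e <= b ->
  uniform_prob ab `[a, e[ = ((e - a) / (b - a))%:E.
Proof.
move=> /andP[ae eb].
have sub_ab : `[a, e[ `<=` `[a, b] by apply: subset_itvl; rewrite bnd_simp.
rewrite /uniform_prob integral_uniform_pdf setIidl //.
rewrite (eq_integral (cst (b - a)^-1%:E)); last first.
  by move=> x /[!inE] /sub_ab; rewrite /= in_itv /uniform_pdf /= => ->.
rewrite integral_cst //= lebesgue_measure_itv /= lte_fin.
case: ltgtP ae => // [ae _|<- _]; last by rewrite mule0 subrr mul0r.
by rewrite -EFinD -EFinM mulrC.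
Qed.

Lemma integral_linear (R : realType) (k a b : R) : a < b ->
  (\int[lebesgue_measure]_(x in `[a, b]) (k * x)%:E = (k / 2 * (b ^+ 2 - a ^+ 2))%:E)%E.
Proof.
move=> ab; have antider_cont : continuous (fun x : R => k / 2 * x ^+ 2).
  by move=> x; apply: cvgM; [exact: cvg_cst | exact: exprn_continuous].
rewrite (@continuous_FTC2 _ _ (fun x => k / 2 * x ^+ 2)) //.
- by rewrite -EFinB mulrBr.
- apply: continuous_in_subspaceT => x _.
  by apply: cvgM; [exact: cvg_cst | exact: cvg_id].
- split.
  + by move=> x _; apply: derivableM => //; exact: exprn_derivable.
  + exact: cvg_at_right_filter (antider_cont _).
  + exact: cvg_at_left_filter (antider_cont _).
- move=> x _; rewrite derive1E deriveM // derive_cst scaler0 addr0 exp_derive.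
  by rewrite expr1 /GRing.scale /=; field.
Qed.

Section root_region_measure.
Variables (R : realType) (q : R).

Lemma section_length_01 (s : R) : 0 < q -> q < 1 / 2 -> -1 <= s <= 0 ->
  0 <= - q * s / (1 - q) <= 1.
Proof.
move=> q_gt0 q_lt_half /andP[s_ge s_le]; have q1 : 0 < 1 - q by lra.
have qs_ge : 0 <= q * (s + 1) by apply: mulr_ge0; lra.
by rewrite divr_ge0 ?ler_pdivrMr //=; nra.
Qed.

Lemma measurable_root_region : measurable (root_region q).
Proof.
have m_lt : measurable_fun setT
    (fun ts : R * R => (1 - q) * (ts.1 - 1) < - q * ts.2).
  apply: measurable_fun_ltr; apply: measurable_funM => //.
  by apply: measurable_funB => //; exact: measurable_fst.
by have := m_lt measurableT [set true] I; rewrite setTI preimage_true.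
Qed.

Lemma ysection_root_region (s : R) : 0 < q -> q < 1 / 2 -> -1 <= s <= 0 ->
  ysection (root_region q) s `&` `[1, 2] = `[1, 1 + - q * s / (1 - q)[%classic.
Proof.
move=> q_gt0 q_lt_half s_range; have q1 : 0 < 1 - q by lra.
have /andP[_ len_le1] := section_length_01 s q_gt0 q_lt_half s_range.
have in_region t : ((1 - q) * (t - 1) < - q * s) = (t < 1 + - q * s / (1 - q)).
  by rewrite -ltrBlDl ltr_pdivlMr // mulrC.
apply/seteqP; split => t; rewrite /ysection /root_region /= !in_itv /= inE /=.
  by move=> [region /andP[t_ge _]]; rewrite t_ge -in_region.
move=> /andP[t_ge t_lt]; rewrite in_region t_lt t_ge; split => //.
move: t_lt len_le1; move: (- q * s / (1 - q)) => u; lra.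
Qed.

Lemma uniform_ysection_root_region (s : R) : 0 < q -> q < 1 / 2 -> -1 <= s <= 0 ->
  uniform_prob (@lt_1_2 R) (ysection (root_region q) s) = (- q / (1 - q) * s)%:E.
Proof.
move=> q_gt0 q_lt_half s_range.
transitivity (uniform_prob (@lt_1_2 R) `[1, 1 + - q * s / (1 - q)[).
  by rewrite /uniform_prob integral_uniform_pdf ysection_root_region.
rewrite uniform_prob_itv; first by congr (_%:E); field; lra.
have := section_length_01 s q_gt0 q_lt_half s_range.
by move: (- q * s / (1 - q)) => u; lra.
Qed.

(* Integrating the section lengths -q s/(1-q) over s in [-1,0] (the second
   factor has density 1) gives the mass q/(2(1-q)) of the region. *)
Lemma measure_root_region : 0 < q -> q < 1 / 2 ->
  (uniform_prob (@lt_1_2 R) \x uniform_prob (@lt_m1_0 R))%E (root_region q)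
  = (q / (2 * (1 - q)))%:E.
Proof.
move=> q_gt0 q_lt_half.
rewrite (@product_measure_unique _ _ _ _ _ _ _
  (uniform_prob (@lt_1_2 R) \x^ uniform_prob (@lt_m1_0 R))%E); last 2 first.
- by move=> A1 A2 mA1 mA2; apply: product_measure2E.
- exact: measurable_root_region.
transitivity (\int[uniform_prob (@lt_m1_0 R)]_s
  (uniform_prob (@lt_1_2 R) \o ysection (root_region q)) s)%E; first by [].
rewrite integral_uniform //; last first.
  exact: (@measurable_fun_ysection _ _ _ _ _ (uniform_prob (@lt_1_2 R)) _
    measurable_root_region).
under eq_integral => s /[!inE] s_range do
  rewrite /= uniform_ysection_root_region //.
rewrite integral_linear ?ltrN10 // -EFinM; congr (_%:E).
by field; lra.
Qed.

End root_region_measure.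

(* The main estimate: the event is contained in the region, which has mass
   q/(2(1-q)); the event itself need not be known to be measurable. *)
Lemma p3PD_le {R : realType} (q : R) : 0 < q -> q < 1 / 2 ->
  (p3PD q <= (q / (2 * (1 - q)))%:E)%E.
Proof.
move=> q_gt0 q_lt_half; rewrite /p3PD -measure_root_region //.
apply: product_measure1_monotone => [A | A B AB | ts].
- exact: measure_ge0.
- exact: uniform_prob_monotone.
- exact: three_roots_in_region.
Qed.

Lemma bound_le {R : realFieldType} {q : R} : 0 < q -> q < 1 / 2 ->
  q / (2 * (1 - q)) <= q /\ q / (2 * (1 - q)) <= 1 / 2.
Proof.
move=> q_gt0 q_lt_half; have denom_gt0 : 0 < 2 * (1 - q) by lra.
by split; rewrite ler_pdivrMr //; nra.
Qed.

Theorem lemma2p5 (R : realType) :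
  (forall q : R, 0 < q -> q < 1 / 2 ->
     (p3PD q <= (q / (2 * (1 - q)))%:E)%E /\ (p3PD q <= (1 / 2)%:E)%E) /\
  (p3PD q @[q --> (0 : R)^'+] --> 0%E).
Proof.
split=> [q q_gt0 q_lt_half | ].
  split; first exact: p3PD_le.
  apply: (le_trans (p3PD_le q q_gt0 q_lt_half)).
  by rewrite lee_fin; case: (bound_le q_gt0 q_lt_half).
apply: (@squeeze_cvge _ _ _ _ (cst 0%E) _ (fun q => q%:E)).
- near=> q; rewrite measure_ge0 /=.
  have q_gt0 : 0 < q by near: q; exact: nbhs_right_gt.
  have q_lt_half : q < 1 / 2 by near: q; apply: nbhs_right_lt; lra.
  apply: (le_trans (p3PD_le q q_gt0 q_lt_half)).
  by rewrite lee_fin; case: (bound_le q_gt0 q_lt_half).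
- exact: cvg_cst.
- by apply: cvg_EFin; [near=> x | exact: cvg_at_right_filter cvg_id].
Unshelve. all: by end_near.
Qed.
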